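(* Let $\hat U_i=\mathrm{sign}(Y_i-\hat Q(X_i))$. Then $$\hat\psi_{\mathrm T}^+\le\frac{\mathbb P_n(Y-\hat Q(X))Z\big(1+\Lambda^{\hat U}(1-\hat e(X))/\hat e(X)\big)+\mathbb P_n\hat Q(X)Z/\hat e(X)}{\mathbb P_nZ/\hat e(X)}.$$
   Context: Data $(X_i,Y_i,Z_i)_{i\le n}$; $\mathbb P_n f=\frac1n\sum_if(X_i,Y_i,Z_i)$; $\Lambda\ge1$, $\tau=\Lambda/(\Lambda+1)$; $\hat e(X_i)\in(0,1)$ for all $i$; $\hat Q:\mathcal X\to\mathbb R$ is an estimate of the conditional $\tau$-quantile of $Y$ given $X$ and $Z=1$; $\mathrm{sign}(0)=0$. $\mathcal E_n(\Lambda)=\{\bar e\in\mathbb R^n:\Lambda^{-1}\le\frac{\bar e_i/(1-\bar e_i)}{\hat e(X_i)/(1-\hat e(X_i))}\le\Lambda\ \forall i\}$, and $\hat\psi_{\mathrm T}^+=\max_{\bar e\in\mathcal E_n(\Lambda)}\frac{\sum_iY_iZ_i/\bar e_i}{\sum_iZ_i/\bar e_i}$ subject to $\frac1n\sum_i\hat Q(X_i)Z_i/\bar e_i=\frac1n\sum_i\hat Q(X_i)Z_i/\hat e(X_i)$ and $\frac1n\sum_iZ_i/\bar e_i=\frac1n\sum_iZ_i/\hat e(X_i)$. *)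

From mathcomp Require Import all_boot all_order all_algebra.
Set Implicit Arguments. Unset Strict Implicit. Unset Printing Implicit Defensive.
Import Order.TTheory GRing.Theory Num.Theory.
Local Open Scope ring_scope.

Section Defs.
Variable R : realFieldType.

Definition Pn (n : nat) (f : 'I_n -> R) : R := n%:R^-1 * \sum_(i < n) f i.

Definition odds (e : R) : R := e / (1 - e).

Definition in_En (n : nat) (Lam : R) (eh : 'I_n -> R) (ebar : 'I_n -> R) : Prop :=
  forall i : 'I_n, Lam^-1 <= odds (ebar i) / odds (eh i) <= Lam.

Definition psiT_obj (n : nat) (Y Z ebar : 'I_n -> R) : R :=
  (\sum_(i < n) Y i * Z i / ebar i) / (\sum_(i < n) Z i / ebar i).

(* feasibility for the optimisation problem defining psi_T^+ *)
Definition psiT_feasible (n : nat) (Lam : R) (Q eh Z ebar : 'I_n -> R) : Prop :=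
  [/\ in_En Lam eh ebar,
      Pn (fun i => Q i * Z i / ebar i) = Pn (fun i => Q i * Z i / eh i) &
      Pn (fun i => Z i / ebar i) = Pn (fun i => Z i / eh i)].

Definition sign (x : R) : int := sgz x.
End Defs.

From mathcomp Require Import all_boot all_order all_algebra ring lra.
Import Order.TTheory GRing.Theory Num.Theory.
Local Open Scope ring_scope.

(* The two moment constraints make the denominator of the objective equal to
   P_n Z/ê and turn its Q̂-part into P_n Q̂Z/ê, so only Σ (Y - Q̂) Z / ē is left
   to bound.  Writing 1/ē = 1 + 1/odds(ē), the odds-ratio constraint puts
   1/odds(ē) between Λ^-1 (1-ê)/ê and Λ (1-ê)/ê; each term is then bounded by
   the end of that interval selected by the sign of Y - Q̂. *)

Section Odds.
Variable R : realFieldType.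
Implicit Types e p q L d c r z : R.

Lemma odds0 : odds (0 : R) = 0.
Proof. by rewrite /odds mul0r. Qed.

Lemma odds_gt0 e : 0 < e < 1 -> 0 < odds e.
Proof. by move=> /andP[e0 e1]; rewrite /odds divr_gt0 // subr_gt0. Qed.

Lemma invf_odds e : (odds e)^-1 = (1 - e) / e.
Proof. by rewrite /odds invfM invrK mulrC. Qed.

Lemma invf_add1_invf_odds {e} : e != 0 -> e^-1 = 1 + (odds e)^-1.
Proof. by move=> e0; rewrite invf_odds; field. Qed.

Lemma ratio_bounds_invf {L p q} : 0 < L -> 0 < p -> 0 < q ->
  L^-1 <= p / q <= L -> L^-1 * q^-1 <= p^-1 <= L * q^-1.
Proof.
move=> L0 p0 q0 /andP[lo hi]; apply/andP; split.
- by rewrite -invfM lef_pV2 ?posrE ?mulr_gt0 // -ler_pdivrMr.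
- by rewrite -[L]invrK -invfM lef_pV2 ?posrE ?mulr_gt0 ?invr_gt0 // -ler_pdivlMr.
Qed.

Lemma ler_mul_sgz_expr L c r d : 0 < L -> L^-1 * r <= c <= L * r ->
  d * c <= d * (L ^ sgz d * r).
Proof.
move=> L0 /andP[lo hi].
have [dn|dp|->] := ltgtP d 0; last by rewrite !mul0r.
- by rewrite ltr0_sgz // exprN1 ler_nM2l.
- by rewrite gtr0_sgz // expr1z ler_pM2l.
Qed.

Lemma ipw_term_le L e p d z : 0 < L -> 0 < e < 1 -> 0 <= z ->
  L^-1 <= odds p / odds e <= L ->
  d * z / p <= d * z * (1 + L ^ sgz d * (1 - e) / e).
Proof.
move=> L0 e01 z0 hr.
have q0 : 0 < odds e by exact: odds_gt0.
have p0 : 0 < odds p.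
  have : 0 < odds p / odds e by apply: lt_le_trans (andP hr).1; rewrite invr_gt0.
  by rewrite pmulr_lgt0 // invr_gt0.
have pn0 : p != 0 by apply: contraTneq p0 => ->; rewrite odds0 ltxx.
have := ratio_bounds_invf L0 p0 q0 hr; rewrite !invf_odds => hinv.
have key : d * p^-1 <= d * (1 + L ^ sgz d * (1 - e) / e).
  rewrite (invf_add1_invf_odds pn0) invf_odds !(mulrDr d) !mulr1 lerD2l -mulrA.
  exact: ler_mul_sgz_expr.
by rewrite mulrAC [X in _ <= X]mulrAC; apply: ler_wpM2r.
Qed.

End Odds.

Section Averages.
Variables (R : realFieldType) (n : nat).
Implicit Types f g : 'I_n -> R.

Lemma PnD f g : Pn f + Pn g = Pn (fun i => f i + g i).
Proof. by rewrite /Pn -mulrDr big_split. Qed.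

Lemma Pn_ratio f g : Pn f / Pn g = (\sum_(i < n) f i) / (\sum_(i < n) g i).
Proof.
rewrite /Pn; case: n f g => [|m] f g; first by rewrite !big_ord0 !mulr0 mul0r.
have k0 : (m.+1%:R : R)^-1 != 0 by rewrite invr_eq0 pnatr_eq0.
by rewrite invfM mulrACA (mulfV k0) mul1r.
Qed.

Lemma Pn_eq_sum f g : Pn f = Pn g -> \sum_(i < n) f i = \sum_(i < n) g i.
Proof.
rewrite /Pn; case: n f g => [|m] f g; first by rewrite !big_ord0.
by apply: mulfI; rewrite invr_eq0 pnatr_eq0.
Qed.

End Averages.

Theorem lemma2 (R : realFieldType) (T : Type) (n : nat)
  (X : 'I_n -> T) (Y Z : 'I_n -> R) (Lam : R) (ehat Qhat : T -> R) :
  1 <= Lam ->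
  (forall i, 0 < ehat (X i) < 1) ->
  (forall i, Z i = 0 \/ Z i = 1) ->
  forall ebar : 'I_n -> R,
    psiT_feasible Lam (fun i => Qhat (X i)) (fun i => ehat (X i)) Z ebar ->
    psiT_obj Y Z ebar <=
      (Pn (fun i => (Y i - Qhat (X i)) * Z i *
                    (1 + Lam ^ (sign (Y i - Qhat (X i))) * (1 - ehat (X i)) / ehat (X i)))
       + Pn (fun i => Qhat (X i) * Z i / ehat (X i)))
      / Pn (fun i => Z i / ehat (X i)).
Proof.
move=> Lam1 he hZ ebar [hodds /Pn_eq_sum hQ /Pn_eq_sum hW].
have Lam0 : 0 < Lam by lra.
have Z0 i : 0 <= Z i by case: (hZ i) => ->; lra.
rewrite PnD Pn_ratio /psiT_obj hW ler_wpM2r //.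
  by rewrite invr_ge0 sumr_ge0 // => i _; rewrite divr_ge0 // ltW // (andP (he i)).1.
have -> : \sum_(i < n) Y i * Z i / ebar i =
    \sum_(i < n) (Y i - Qhat (X i)) * Z i / ebar i
    + \sum_(i < n) Qhat (X i) * Z i / ebar i.
  by rewrite -big_split /=; apply: eq_bigr => i _; ring.
rewrite hQ -big_split /= ler_sum // => i _.
by rewrite lerD2r; apply: ipw_term_le => //; exact: hodds.
Qed.
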